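(* Let $\gamma\subset\mathbb{R}^2$ be a circle of center $\boldsymbol{c}$ and radius $R=1/\kappa>0$, and let $\boldsymbol{x}\in\mathbb{R}^2\setminus\gamma$ with distance $r=|\|\boldsymbol{x}-\boldsymbol{c}\|_2-R|>0$ to $\gamma$, and assume $r\kappa<1$. Let $\boldsymbol{n}$ be the unit vector pointing from $\boldsymbol{x}$ to its closest point on $\gamma$, and let $\mathcal{T}$ be the tangent line to $\gamma$ at that closest point. Let $\boldsymbol{v}$ be a unit vector making an angle $\theta\in[0,\pi/2)$ with $\boldsymbol{n}$, let $\boldsymbol{u}=\frac{r}{\cos\theta}\boldsymbol{v}$ (so $\boldsymbol{x}+\boldsymbol{u}\in\mathcal{T}$), and let $\boldsymbol{x}_\gamma=\boldsymbol{x}+t\boldsymbol{v}$ where $t$ is the smallest $t\ge0$ with $\boldsymbol{x}+t\boldsymbol{v}\in\gamma$ (whenever such $t$ exists). Then: (i) whenever $\boldsymbol{x}_\gamma$ exists, $\displaystyle -C_1 r\kappa\tan^2\theta\le\frac{\|\boldsymbol{x}_\gamma-\boldsymbol{x}\|_2}{\|\boldsymbol{u}\|_2}-1$; (ii) if moreover $\tan^2\theta\le\frac{0.2}{r\kappa}$, then $\boldsymbol{x}_\gamma$ exists and $\displaystyle\frac{\|\boldsymbol{x}_\gamma-\boldsymbol{x}\|_2}{\|\boldsymbol{u}\|_2}-1\le C_2r\kappa\tan^2\theta$, with $C_1=0.625$ and $C_2=2.25$. *)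

From Stdlib Require Import Reals.
Open Scope R_scope.

Definition pt := (R * R)%type.
Definition add (p q : pt) : pt := (fst p + fst q, snd p + snd q).
Definition sub (p q : pt) : pt := (fst p - fst q, snd p - snd q).
Definition scal (a : R) (p : pt) : pt := (a * fst p, a * snd p).
Definition dot (p q : pt) : R := fst p * fst q + snd p * snd q.
Definition norm (p : pt) : R := sqrt (fst p ^ 2 + snd p ^ 2).

Definition on_circle (c : pt) (Rad : R) (p : pt) : Prop := norm (sub p c) = Rad.

Definition is_closest (c : pt) (Rad : R) (x p : pt) : Prop :=
  on_circle c Rad p /\ forall q, on_circle c Rad q -> norm (sub x p) <= norm (sub x q).

Definition first_hit (c : pt) (Rad : R) (x v : pt) (t : R) : Prop :=
  0 <= t /\ on_circle c Rad (add x (scal t v)) /\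
  forall s, 0 <= s < t -> ~ on_circle c Rad (add x (scal s v)).

Definition C1_const : R := 0.625.
Definition C2_const : R := 2.25.

From Stdlib Require Import Reals Lra Psatz.
Open Scope R_scope.

(* With e = kappa (|x - c| - R), so that |e| = r kappa, and w = t cos(theta) / r, so that
   w = |x + t v - x| / |u|, the point x + t v lies on the circle iff
     e (1 + tan^2 theta) w^2 - 2 (1 + e) w + (2 + e) = 0,
   which for theta = 0 has the root w = 1 (the tangent line).  When the discriminant
   D = 1 - e tan^2 theta (2 + e) is nonnegative, the least nonnegative root is
   w* = (2 + e) / (1 + e + sqrt D), and
     w* - 1 = e tan^2 theta (2 + e) / ((1 + sqrt D) (1 + e + sqrt D)),
   which lies between -|e| tan^2 theta / 2 (inside the circle, where sqrt D >= 1) and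
   2 |e| tan^2 theta (outside).  The hypothesis tan^2 theta <= 0.2 / (r kappa) only serves to
   make D nonnegative outside the circle. *)

Lemma norm_sqr (p : pt) : norm p * norm p = dot p p.
Proof.
  unfold norm; rewrite sqrt_sqrt; destruct p as [p1 p2]; unfold dot; simpl; nra.
Qed.

Lemma norm_ge0 (p : pt) : 0 <= norm p.
Proof. apply sqrt_pos. Qed.

Lemma norm_eq_iff (p : pt) (m : R) : 0 <= m -> norm p = m <-> dot p p = m * m.
Proof.
  intro Hm; rewrite <- norm_sqr; pose proof (norm_ge0 p); split; intro Hp.
  - now rewrite Hp.
  - nra.
Qed.

Lemma norm_le_iff (p q : pt) : norm p <= norm q <-> dot p p <= dot q q.
Proof.
  rewrite <- !norm_sqr; pose proof (norm_ge0 p); pose proof (norm_ge0 q); split; intro Hpq; nra.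
Qed.

Lemma norm_scal (k : R) (p : pt) : norm (scal k p) = Rabs k * norm p.
Proof.
  apply norm_eq_iff; [apply Rmult_le_pos; [apply Rabs_pos | apply norm_ge0]|].
  replace (Rabs k * norm p * (Rabs k * norm p)) with ((Rabs k * Rabs k) * (norm p * norm p)) by ring.
  rewrite <- Rabs_mult, Rabs_pos_eq by nra; rewrite norm_sqr.
  destruct p as [p1 p2]; unfold dot, scal; simpl; ring.
Qed.

Lemma dot_scal_r (k : R) (p q : pt) : dot p (scal k q) = k * dot p q.
Proof. destruct p, q; unfold dot, scal; simpl; ring. Qed.

Lemma sub_add_cancel_l (x q : pt) : sub (add x q) x = q.
Proof. destruct x, q; unfold sub, add; simpl; f_equal; ring. Qed.

Lemma on_circle_ray (c x v : pt) (Rad t : R) : 0 <= Rad -> dot v v = 1 ->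
  on_circle c Rad (add x (scal t v)) <->
  t * t + 2 * dot (sub x c) v * t + dot (sub x c) (sub x c) - Rad * Rad = 0.
Proof.
  intros HRad Hv; unfold on_circle; rewrite norm_eq_iff by exact HRad.
  replace (dot (sub (add x (scal t v)) c) (sub (add x (scal t v)) c))
    with (t * t * dot v v + 2 * dot (sub x c) v * t + dot (sub x c) (sub x c))
    by (destruct c, x, v; unfold dot, sub, add, scal; simpl; ring).
  rewrite Hv; lra.
Qed.

Lemma closest_point_radial (c x p : pt) (Rad : R) : 0 < Rad -> 0 < norm (sub x c) ->
  is_closest c Rad x p -> scal (norm (sub x c)) (sub p c) = scal Rad (sub x c).
Proof.
  intros HRad Hd [Hp Hmin].
  set (d := norm (sub x c)) in *.
  assert (Hd2 : dot (sub x c) (sub x c) = d * d) by (symmetry; apply norm_sqr).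
  unfold on_circle in Hp; rewrite norm_eq_iff in Hp by lra.
  (* compare p with the radial projection q of x, which is at distance |d - Rad| from x *)
  set (q := add c (scal (Rad / d) (sub x c))).
  assert (Hq : on_circle c Rad q).
  { unfold on_circle, q; rewrite sub_add_cancel_l, norm_scal, Rabs_pos_eq.
    - fold d; field; apply Rgt_not_eq, Hd.
    - apply Rlt_le, Rdiv_lt_0_compat; lra. }
  specialize (Hmin q Hq); rewrite norm_le_iff in Hmin.
  replace (sub x q) with (scal (1 - Rad / d) (sub x c)) in Hmin
    by (unfold q; destruct c, x; unfold sub, add, scal; simpl; f_equal; ring).
  destruct c as [c1 c2], x as [x1 x2], p as [p1 p2].
  unfold dot, sub, scal in *; simpl in *.
  set (X1 := x1 - c1) in *; set (X2 := x2 - c2) in *.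
  set (P1 := p1 - c1) in *; set (P2 := p2 - c2) in *.
  replace (x1 - p1) with (X1 - P1) in Hmin by (unfold X1, P1; ring).
  replace (x2 - p2) with (X2 - P2) in Hmin by (unfold X2, P2; ring).
  assert (Hqd : (1 - Rad / d) * X1 * ((1 - Rad / d) * X1) + (1 - Rad / d) * X2 * ((1 - Rad / d) * X2)
                = (d - Rad) * (d - Rad)).
  { transitivity ((1 - Rad / d) * (1 - Rad / d) * (X1 * X1 + X2 * X2)); [ring|].
    rewrite Hd2; field; apply Rgt_not_eq, Hd. }
  rewrite Hqd in Hmin.
  assert (HXP : d * Rad <= X1 * P1 + X2 * P2) by lra.
  assert (Hcs : (d * P1 - Rad * X1)² + (d * P2 - Rad * X2)² <= 0).
  { unfold Rsqr.
    replace ((d * P1 - Rad * X1) * (d * P1 - Rad * X1) + (d * P2 - Rad * X2) * (d * P2 - Rad * X2)) with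
      (d * d * (P1 * P1 + P2 * P2) - 2 * d * Rad * (X1 * P1 + X2 * P2) + Rad * Rad * (X1 * X1 + X2 * X2))
      by ring.
    rewrite Hp, Hd2.
    replace (d * d * (Rad * Rad) - 2 * d * Rad * (X1 * P1 + X2 * P2) + Rad * Rad * (d * d))
      with (2 * (d * Rad) * (d * Rad - (X1 * P1 + X2 * P2))) by ring.
    assert (0 < d * Rad) by (apply Rmult_lt_0_compat; lra).
    nra. }
  pose proof (Rle_0_sqr (d * P1 - Rad * X1)); pose proof (Rle_0_sqr (d * P2 - Rad * X2)).
  destruct (Rplus_sqr_eq_0 (d * P1 - Rad * X1) (d * P2 - Rad * X2)) as [Z1 Z2]; [lra|].
  f_equal; lra.
Qed.

Definition hit_poly (e T w : R) : R := e * (1 + T) * w ^ 2 - 2 * (1 + e) * w + (2 + e).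
Definition hit_disc (e T : R) : R := 1 - e * T * (2 + e).
Definition hit_root (e T : R) : R := (2 + e) / (1 + e + sqrt (hit_disc e T)).

Section HitRoot.
Variables e T : R.
Hypothesis e_gt_m1 : -1 < e.
Hypothesis T_ge0 : 0 <= T.

Let s := sqrt (hit_disc e T).

Lemma hit_poly_square (w : R) :
  e * (1 + T) * hit_poly e T w = (e * (1 + T) * w - (1 + e)) ^ 2 - hit_disc e T.
Proof. unfold hit_poly, hit_disc; ring. Qed.

Lemma hit_disc_ge0_of_root (w : R) : hit_poly e T w = 0 -> 0 <= hit_disc e T.
Proof.
  intro Hw; pose proof (hit_poly_square w) as Hsq; rewrite Hw, Rmult_0_r in Hsq.
  pose proof (pow2_ge_0 (e * (1 + T) * w - (1 + e))); lra.
Qed.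

Lemma hit_denom_gt0 : 0 < 1 + e + s.
Proof. pose proof (sqrt_pos (hit_disc e T)); unfold s; lra. Qed.

Lemma hit_root_gt0 : 0 < hit_root e T.
Proof. pose proof hit_denom_gt0; unfold hit_root; fold s; apply Rdiv_lt_0_compat; lra. Qed.

Hypothesis disc_ge0 : 0 <= hit_disc e T.

Lemma sqrt_hit_disc_sqr : s * s = hit_disc e T.
Proof. exact (sqrt_sqrt _ disc_ge0). Qed.

Lemma hit_poly_factor (w : R) :
  hit_poly e T w = (w - hit_root e T) * (e * (1 + T) * w - (1 + e) - s).
Proof.
  pose proof hit_denom_gt0; pose proof sqrt_hit_disc_sqr as Hs.
  unfold hit_root, hit_poly; fold s.
  apply (Rmult_eq_reg_r (1 + e + s)); [|lra].
  field_simplify; [|lra].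
  replace (s ^ 2) with (s * s) by ring; rewrite Hs; unfold hit_disc; ring.
Qed.

Lemma hit_root_is_root : hit_poly e T (hit_root e T) = 0.
Proof. rewrite hit_poly_factor; ring. Qed.

Lemma hit_root_le_root (w : R) : 0 <= w -> hit_poly e T w = 0 -> hit_root e T <= w.
Proof.
  intros Hw Hroot; rewrite hit_poly_factor in Hroot.
  destruct (Rmult_integral _ _ Hroot) as [Hhit | Hother]; [lra|].
  pose proof hit_denom_gt0 as Hden; pose proof sqrt_hit_disc_sqr as Hs.
  assert (Hs0 : 0 <= s) by apply sqrt_pos.
  assert (HTw : 0 <= (1 + T) * w) by nra.
  assert (He : 0 < e) by nra.
  (* The other root is nonnegative only outside the circle (e > 0), where it exceeds [hit_root]. *)
  assert (Hgap : e * (1 + T) * (w * (1 + e + s) - (2 + e)) = 2 * s * s + 2 * (1 + e) * s).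
  { replace (e * (1 + T) * (w * (1 + e + s) - (2 + e)))
      with ((e * (1 + T) * w) * (1 + e + s) - e * (1 + T) * (2 + e)) by ring.
    replace (e * (1 + T) * w) with (1 + e + s) by lra.
    unfold hit_disc in Hs; nra. }
  unfold hit_root; fold s.
  apply (Rmult_le_reg_r (1 + e + s)); [lra|].
  unfold Rdiv; rewrite Rmult_assoc, Rinv_l, Rmult_1_r by lra.
  assert (Hpos : 0 <= w * (1 + e + s) - (2 + e)).
  { apply (Rmult_le_reg_l (e * (1 + T))); [nra|]. rewrite Rmult_0_r, Hgap; nra. }
  lra.
Qed.

Lemma hit_root_sub1 :
  hit_root e T - 1 = e * T * (2 + e) / ((1 + s) * (1 + e + s)).
Proof.
  pose proof hit_denom_gt0; pose proof sqrt_hit_disc_sqr as Hs.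
  assert (Hs0 : 0 <= s) by apply sqrt_pos.
  unfold hit_disc in Hs; unfold hit_root; fold s.
  replace (e * T * (2 + e)) with (1 - s * s) by lra.
  field; lra.
Qed.

Lemma hit_root_sub1_bounds :
  - (Rabs e * T) / 2 <= hit_root e T - 1 <= 2 * Rabs e * T.
Proof.
  pose proof hit_denom_gt0 as Hden; pose proof sqrt_hit_disc_sqr as Hs.
  assert (Hs0 : 0 <= s) by apply sqrt_pos.
  rewrite hit_root_sub1.
  set (q := e * T * (2 + e) / ((1 + s) * (1 + e + s))).
  assert (Hq : q * ((1 + s) * (1 + e + s)) = e * T * (2 + e)) by (unfold q; field; lra).
  unfold hit_disc in Hs.
  destruct (Rle_or_lt 0 e) as [He | He].
  - rewrite Rabs_pos_eq by lra.
    assert (HeT : 0 <= e * T) by nra.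
    assert (Hden2 : 1 + e <= (1 + s) * (1 + e + s)) by nra.
    assert (Hq0 : 0 <= q) by nra.
    split; [nra|].
    assert (Hq2 : q * (1 + e) <= e * T * (2 + e)) by nra.
    nra.
  - rewrite Rabs_left by lra.
    assert (HeT : e * T <= 0) by nra.
    (* inside the circle (e < 0) the discriminant is at least 1 *)
    assert (Hs1 : 1 <= s) by nra.
    assert (Hden2 : 2 * (2 + e) <= (1 + s) * (1 + e + s)) by nra.
    assert (Hq0 : q <= 0) by nra.
    split; [|nra].
    assert (Hq2 : e * T * (2 + e) <= q * (2 * (2 + e))) by nra.
    nra.
Qed.
End HitRoot.

Lemma hit_disc_ge0 (e T : R) : -1 < e < 1 -> 0 <= T -> Rabs e * T <= 1 / 3 -> 0 <= hit_disc e T.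
Proof.
  intros He HT HeT; unfold hit_disc.
  assert (e * T <= Rabs e * T) by (apply Rmult_le_compat_r; [lra | apply Rle_abs]).
  assert (0 <= Rabs e * T) by (apply Rmult_le_pos; [apply Rabs_pos | lra]).
  nra.
Qed.

Lemma closest_point_dot (c x p v : pt) (Rad : R) : 0 < Rad -> 0 < norm (sub x c) ->
  is_closest c Rad x p ->
  norm (sub x c) * dot v (sub p x) = (Rad - norm (sub x c)) * dot (sub x c) v.
Proof.
  intros HRad Hd Hcl.
  pose proof (closest_point_radial c x p Rad HRad Hd Hcl) as Hrad.
  set (d := norm (sub x c)) in *; clearbody d.
  destruct c as [c1 c2], x as [x1 x2], p as [p1 p2], v as [v1 v2].
  unfold dot, sub, scal in *; simpl in *.
  injection Hrad as H1 H2.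
  transitivity (v1 * (d * (p1 - c1)) + v2 * (d * (p2 - c2)) - d * (v1 * (x1 - c1) + v2 * (x2 - c2)));
    [ring | rewrite H1, H2; ring].
Qed.

Lemma circle_quadratic_iff_hit_poly (kappa Rad d r a T b t : R) :
  kappa * Rad = 1 -> 0 < r -> r * r = (d - Rad) * (d - Rad) ->
  b * (Rad - d) = a * r * d -> a * a * (1 + T) = 1 ->
  t * t + 2 * b * t + d * d - Rad * Rad = 0 <-> hit_poly (kappa * (d - Rad)) T (a / r * t) = 0.
Proof.
  intros HRk Hr Hr2 Hb HaT.
  set (e := kappa * (d - Rad)).
  assert (He : e <> 0) by (unfold e; intro He0; nra).
  assert (Hlead : e * (1 + T) * (a * a) = e)
    by (transitivity (e * (a * a * (1 + T))); [ring | rewrite HaT; ring]).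
  assert (Hlin : (1 + e) * (a * r) = - e * b).
  { replace (1 + e) with (kappa * d) by (unfold e; lra).
    replace (- e * b) with (kappa * (b * (Rad - d))) by (unfold e; ring).
    rewrite Hb; ring. }
  assert (Hconst : (2 + e) * (r * r) = e * (d * d - Rad * Rad)).
  { replace (2 + e) with (kappa * (d + Rad)) by (unfold e; lra).
    rewrite Hr2; unfold e; ring. }
  assert (Hid : r * r * hit_poly e T (a / r * t) = e * (t * t + 2 * b * t + d * d - Rad * Rad)).
  { transitivity (e * (1 + T) * (a * a) * (t * t) - 2 * ((1 + e) * (a * r)) * t + (2 + e) * (r * r));
      [unfold hit_poly; field; lra |].
    rewrite Hlead, Hlin, Hconst; ring. }
  assert (Hr2pos : r * r <> 0) by nra.
  split; intro Hq.
  - rewrite Hq, Rmult_0_r in Hid.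
    destruct (Rmult_integral _ _ Hid) as [H0 | H0]; [contradiction | exact H0].
  - rewrite Hq, Rmult_0_r in Hid; symmetry in Hid.
    destruct (Rmult_integral _ _ Hid) as [H0 | H0]; [contradiction | exact H0].
Qed.

Lemma first_hit_iff_hit_root (c x v : pt) (Rad k e T : R) : 0 < k -> -1 < e -> 0 <= T ->
  (forall t, on_circle c Rad (add x (scal t v)) <-> hit_poly e T (k * t) = 0) ->
  forall t, first_hit c Rad x v t <-> 0 <= hit_disc e T /\ k * t = hit_root e T.
Proof.
  intros Hk He HT Hhit t; split.
  - intros [Ht [Hon Hfirst]]; apply Hhit in Hon.
    assert (HD : 0 <= hit_disc e T) by exact (hit_disc_ge0_of_root e T (k * t) Hon).
    split; [exact HD|].
    assert (Hle : hit_root e T <= k * t) by (apply hit_root_le_root; auto; nra).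
    assert (Hon' : on_circle c Rad (add x (scal (hit_root e T / k) v))).
    { apply Hhit; replace (k * (hit_root e T / k)) with (hit_root e T) by (field; lra).
      now apply hit_root_is_root. }
    destruct (Rlt_or_le (hit_root e T / k) t) as [Hlt | Hge].
    + exfalso; refine (Hfirst _ _ Hon'); split; [|exact Hlt].
      apply Rlt_le, Rdiv_lt_0_compat; [now apply hit_root_gt0 | exact Hk].
    + apply Rle_antisym; [|exact Hle].
      apply (Rmult_le_compat_l k) in Hge; [|lra].
      replace (k * (hit_root e T / k)) with (hit_root e T) in Hge by (field; lra); lra.
  - intros [HD Ht].
    pose proof (hit_root_gt0 e T He) as Hpos.
    split; [|split].
    + nra.
    + apply Hhit; rewrite Ht; now apply hit_root_is_root.
    + intros s [Hs0 Hst] Hon; apply Hhit in Hon.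
      pose proof (hit_root_le_root e T He HT HD (k * s)) as Hle.
      assert (k * s < k * t) by (apply Rmult_lt_compat_l; lra).
      assert (k * s >= 0) by nra.
      specialize (Hle ltac:(lra) Hon); lra.
Qed.

Lemma cos_sqr_mul_1_plus_tan_sqr (theta : R) : cos theta <> 0 ->
  cos theta * cos theta * (1 + tan theta ^ 2) = 1.
Proof.
  intro Hc; unfold tan; pose proof (sin2_cos2 theta) as Hsc; unfold Rsqr in Hsc.
  field_simplify; [lra | exact Hc].
Qed.

Lemma on_circle_ray_iff_hit_poly (c x p v : pt) (kappa a T : R) :
  0 < kappa ->
  let Rad := 1 / kappa in
  let r := Rabs (norm (sub x c) - Rad) in
  0 < r -> r * kappa < 1 -> is_closest c Rad x p -> norm v = 1 ->
  dot v (scal (1 / r) (sub p x)) = a -> a * a * (1 + T) = 1 ->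
  forall t, on_circle c Rad (add x (scal t v)) <->
    hit_poly (kappa * (norm (sub x c) - Rad)) T (a / r * t) = 0.
Proof.
  intros Hk Rad r Hr Hrk Hcl Hv Hdot HaT t.
  set (d := norm (sub x c)) in *.
  assert (HRk : kappa * Rad = 1) by (unfold Rad; field; lra).
  assert (HRad : 0 < Rad) by (unfold Rad; apply Rdiv_lt_0_compat; lra).
  assert (Hd : 0 < d).
  { destruct (Rle_lt_or_eq_dec 0 d (norm_ge0 _)) as [Hd | Hd]; [exact Hd|].
    exfalso; unfold r in Hrk; rewrite <- Hd, Rminus_0_l, Rabs_Ropp, Rabs_pos_eq in Hrk; [nra | lra]. }
  assert (Hr2 : r * r = (d - Rad) * (d - Rad)).
  { unfold r; rewrite <- Rabs_mult, Rabs_pos_eq; [reflexivity | apply Rle_0_sqr]. }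
  assert (Hb : dot (sub x c) v * (Rad - d) = a * r * d).
  { pose proof (closest_point_dot c x p v Rad HRad Hd Hcl) as Hcd; fold d in Hcd.
    rewrite dot_scal_r in Hdot.
    assert (Hpx : dot v (sub p x) = a * r) by (rewrite <- Hdot; field; apply Rgt_not_eq, Hr).
    rewrite Rmult_comm, <- Hcd, Hpx; ring. }
  assert (Hvv : dot v v = 1) by (rewrite <- norm_sqr, Hv; ring).
  rewrite on_circle_ray by (exact Hvv || lra).
  rewrite <- (norm_sqr (sub x c)); fold d.
  apply circle_quadratic_iff_hit_poly; assumption.
Qed.

Lemma ray_length_ratio (x v : pt) (r a t : R) : norm v = 1 -> 0 < r -> 0 < a -> 0 <= t ->
  norm (sub (add x (scal t v)) x) / norm (scal (r / a) v) - 1 = a / r * t - 1.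
Proof.
  intros Hv Hr Ha Ht; rewrite sub_add_cancel_l, !norm_scal, Hv, !Rabs_pos_eq.
  - field; split; apply Rgt_not_eq; assumption.
  - apply Rlt_le, Rdiv_lt_0_compat; assumption.
  - exact Ht.
Qed.

Theorem lemma4 (c x p v : pt) (kappa theta : R) :
  0 < kappa ->
  let Rad := 1 / kappa in
  let r := Rabs (norm (sub x c) - Rad) in
  0 < r -> r * kappa < 1 ->
  is_closest c Rad x p ->
  let n := scal (1 / r) (sub p x) in
  norm v = 1 -> 0 <= theta < PI / 2 -> dot v n = cos theta ->
  let u := scal (r / cos theta) v in
  (forall t, first_hit c Rad x v t ->
     - C1_const * r * kappa * (tan theta) ^ 2
       <= norm (sub (add x (scal t v)) x) / norm u - 1) /\
  ((tan theta) ^ 2 <= 0.2 / (r * kappa) ->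
     exists t, first_hit c Rad x v t /\
       norm (sub (add x (scal t v)) x) / norm u - 1
         <= C2_const * r * kappa * (tan theta) ^ 2).
Proof.
  intros Hk Rad r Hr Hrk Hcl n Hv Htheta Hdot u.
  set (T := tan theta ^ 2) in *.
  set (e := kappa * (norm (sub x c) - Rad)).
  assert (Ha : 0 < cos theta) by (apply cos_gt_0; pose proof PI_RGT_0; lra).
  assert (HaT : cos theta * cos theta * (1 + T) = 1)
    by (apply cos_sqr_mul_1_plus_tan_sqr, Rgt_not_eq, Ha).
  assert (HT : 0 <= T) by apply pow2_ge_0.
  assert (He : Rabs e = r * kappa) by (unfold e, r; rewrite Rabs_mult, Rabs_pos_eq by lra; ring).
  assert (He1 : -1 < e < 1) by (rewrite <- He in Hrk; apply Rabs_def2 in Hrk; lra).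
  assert (Hk0 : 0 < cos theta / r) by (apply Rdiv_lt_0_compat; assumption).
  pose proof (first_hit_iff_hit_root c x v Rad (cos theta / r) e T Hk0 (proj1 He1) HT
    (on_circle_ray_iff_hit_poly c x p v kappa (cos theta) T Hk Hr Hrk Hcl Hv Hdot HaT)) as Hfirst.
  assert (HrkT : 0 <= r * kappa * T) by (apply Rmult_le_pos; [nra | exact HT]).
  split.
  - intros t Ht; unfold u; rewrite ray_length_ratio by (destruct Ht; assumption).
    apply Hfirst in Ht as [HD ->].
    pose proof (hit_root_sub1_bounds e T (proj1 He1) HT HD) as Hbound.
    rewrite He in Hbound; unfold C1_const; lra.
  - intros HTb.
    assert (HD : 0 <= hit_disc e T).
    { apply hit_disc_ge0; [exact He1 | exact HT |]. rewrite He.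
      apply (Rmult_le_compat_l (r * kappa)) in HTb; [|nra].
      replace (r * kappa * (0.2 / (r * kappa))) with 0.2 in HTb by (field; nra); lra. }
    pose proof (hit_root_gt0 e T (proj1 He1)) as Hpos.
    exists (hit_root e T / (cos theta / r)).
    assert (Ht : cos theta / r * (hit_root e T / (cos theta / r)) = hit_root e T)
      by (field; split; apply Rgt_not_eq; assumption).
    split; [apply Hfirst; split; assumption|].
    unfold u; rewrite ray_length_ratio, Ht by (try apply Rlt_le, Rdiv_lt_0_compat; assumption).
    pose proof (hit_root_sub1_bounds e T (proj1 He1) HT HD) as Hbound.
    rewrite He in Hbound; unfold C2_const; lra.
Qed.
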